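(* Let $p$ and $q$ be primes with $q\equiv 1 \pmod p$. Let $N=C_q$ be a cyclic group of order $q$ and let $H=\langle x\rangle\times\langle y\rangle$ be an elementary abelian group of order $p^2$. Let $\langle x\rangle$ act faithfully on $N$ and let $\langle y\rangle$ act trivially on $N$, and let $G=N\rtimes H$ be the corresponding semidirect product. Let $U=N\langle x\rangle$ and $V=N\langle xy\rangle$. Then: (i) $U$ and $V$ are both subnormal in $G$, and $G=UV$; (ii) $O_p(G)=\langle y\rangle$ and $O_p(U)=O_p(V)=1$; in particular $O_p(G)\neq O_p(U)O_p(V)$.
   Context: For a finite group $X$ and prime $p$, $O_p(X)$ denotes the largest normal $p$-subgroup of $X$. *)

From mathcomp Require Import all_boot all_fingroup all_solvable.
Set Implicit Arguments.
Unset Strict Implicit.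
Unset Printing Implicit Defensive.

From mathcomp Require Import all_boot all_fingroup all_solvable.
From mathcomp Require Import zify.
Set Implicit Arguments.
Unset Strict Implicit.
Unset Printing Implicit Defensive.
Local Open Scope group_scope.

(* In a semidirect product N ><| H of a p'-group N by a p-group H, the p-core
   lies in the Sylow subgroup H and, meeting N trivially, centralizes N; hence
   'O_p(N ><| H) = 'C_H(N). Applied to G = N ><| H, U = N ><| <[x]> and
   V = N ><| <[x * y]> this gives 'O_p(G) = <[y]> and 'O_p(U) = 'O_p(V) = 1,
   the latter because (x * y) ^+ k centralizes N only if x ^+ k does, i.e.
   only if p divides k. U and V are normal in G because H is abelian, and
   U V contains N, x and y, hence N H = G. *)

Lemma TI_normal_cents (gT : finGroupType) (G K P : {group gT}) :
  K <| G -> P <| G -> K :&: P = 1 -> P \subset 'C(K).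
Proof.
case/andP=> sKG nKG /andP[sPG nPG] tiKP.
apply/commG1P/trivgP; rewrite -tiKP setIC commg_subI //.
  by rewrite subsetI subxx (subset_trans sPG nKG).
by rewrite subsetI subxx (subset_trans sKG nPG).
Qed.

Section PcoreSdprod.

Variables (gT : finGroupType) (p : nat) (G N H : {group gT}).
Hypotheses (defG : N ><| H = G) (p'N : p^'.-group N) (pH : p.-group H).

Lemma pcore_sdprod_cent : 'O_p(G) = 'C_H(N).
Proof.
have [nsNG sHG _ nNH _] := sdprod_context defG.
apply/eqP; rewrite eqEsubset; apply/andP; split.
  have hallH : p.-Hall(G) H.
    by rewrite /pHall sHG pH -divgS // -(sdprod_card defG) mulnK.
  rewrite subsetI pcore_sub_Hall // (TI_normal_cents nsNG) ?pcore_normal //.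
  by apply: coprime_TIg; exact: p'nat_coprime p'N (pcore_pgroup _ _).
apply: pcore_max; first exact: pgroupS (subsetIl _ _) pH.
rewrite /normal subIset ?sHG //= -(sdprodW defG) mul_subG //.
  by rewrite cents_norm // centsC subsetIr.
by rewrite normsI ?normG ?norms_cent.
Qed.

End PcoreSdprod.

Section Joins.

Variable gT : finGroupType.
Implicit Types (A B C : {set gT}) (x y : gT).

Lemma joing_joingl A B C : (A <*> B) <*> (A <*> C) = A <*> (B <*> C).
Proof.
rewrite joingA [_ <*> A]joingC joingA [A <*> A]joingE setUid joing_idl.
by rewrite -joingA.
Qed.

Lemma joing_cycleM x y : <[x]> <*> <[x * y]> = <[x]> <*> <[y]>.
Proof.
(* Stated for the %G join, the form in which [join_subG] leaves the goals. *)
have xJ z : x \in (<[x]> <*> <[z]>)%G := subsetP (joing_subl _ _) x (cycle_id x).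
have zJ z : z \in (<[x]> <*> <[z]>)%G := subsetP (joing_subr _ _) z (cycle_id z).
have yJ : y \in (<[x]> <*> <[x * y]>)%G.
  by rewrite -{1}[y](mulKg x) groupM ?groupV ?xJ ?zJ.
by apply/eqP; rewrite eqEsubset !join_subG !cycle_subG !xJ yJ groupM ?zJ.
Qed.

End Joins.

Section Centralizers.

Variable gT : finGroupType.
Implicit Types (A B N : {group gT}) (x y : gT).

Lemma subcent_mulg_faithful A B N :
  B \subset 'C(N) -> 'C_A(N) = 1 -> 'C_(A * B)(N) = B.
Proof. by move=> cNB tiCA; rewrite setIC -group_modr // setIC tiCA mul1g. Qed.

Lemma subcent_cycleM_faithful x y N :
  commute x y -> y \in 'C(N) -> #[y] %| #[x] -> 'C_<[x]>(N) = 1 ->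
  'C_<[x * y]>(N) = 1.
Proof.
move=> cxy cNy dvd_yx tiCx; apply/trivgP/subsetP=> _ /setIP[/cycleP[k ->]].
rewrite expgMn // groupMr ?(groupX k cNy) // => cNxk.
have /set1gP xk1 : x ^+ k \in [1] by rewrite -tiCx inE mem_cycle.
have /eqP yk1 : y ^+ k == 1.
  by rewrite -order_dvdn (dvdn_trans dvd_yx) // order_dvdn xk1.
by rewrite xk1 yk1 mulg1 set11.
Qed.

End Centralizers.

Lemma sdprod_abelian_joing_normal (gT : finGroupType) (G N H B : {group gT}) :
  N ><| H = G -> abelian H -> B \subset H -> N <*> B <| G.
Proof.
move=> defG cHH sBH.
have [/andP[sNG _] sHG defNH nNH _] := sdprod_context defG.
rewrite /normal join_subG sNG (subset_trans sBH sHG) -defNH mul_subG //.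
  exact: subset_trans (joing_subl N B) (normG _).
by rewrite normsY // sub_abelian_norm.
Qed.

Lemma abelem_dprod_cycle_orders (gT : finGroupType) (p : nat) (H : {group gT})
    (x y : gT) :
  prime p -> p.-abelem H -> <[x]> \x <[y]> = H -> #|H| = (p ^ 2)%N ->
  #[x] = p /\ #[y] = p.
Proof.
move=> pr_p + defH oH; rewrite abelemE // => /andP[_ eH].
have [_ defXY _ _] := dprodP defH.
have xH : x \in H by rewrite -cycle_subG -defXY mulG_subl.
have yH : y \in H by rewrite -cycle_subG -defXY mulG_subr.
have le_p z : z \in H -> #[z] <= p.
  by move=> zH; rewrite dvdn_leq ?prime_gt0 // (dvdn_trans (dvdn_exponent zH)).
have := le_p x xH; have := le_p y yH.
have oxy : (#[x] * #[y])%N = (p * p)%N by rewrite !orderE (dprod_card defH) oH.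
have := order_gt0 x; have := order_gt0 y; nia.
Qed.

Theorem theorem3p3 (gT : finGroupType) (p q : nat) (G N H : {group gT}) (x y : gT) :
  prime p -> prime q -> q = 1 %[mod p] ->
  cyclic N -> #|N| = q ->
  <[x]> \x <[y]> = H -> p.-abelem H -> #|H| = (p ^ 2)%N ->
  N ><| H = G ->
  'C_<[x]>(N) = 1 ->
  <[y]> \subset 'C(N) ->
  [/\ (N <*> <[x]>) <|<| G, (N <*> <[x * y]>) <|<| G
    & G :=: (N <*> <[x]>) * (N <*> <[x * y]>)] /\
  [/\ 'O_p(G) = <[y]>,
      'O_p(N <*> <[x]>) = 1,
      'O_p(N <*> <[x * y]>) = 1
    & 'O_p(G) != 'O_p(N <*> <[x]>) * 'O_p(N <*> <[x * y]>)].
Proof.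
move=> pr_p pr_q q1 _ oN defH abH oH defG tiCx cNY.
have pH := abelem_pgroup abH; have cHH := abelem_abelian abH.
have [ox oy] := abelem_dprod_cycle_orders pr_p abH defH oH.
have [_ defXY cXY _] := dprodP defH.
have p'N : p^'.-group N.
  rewrite /pgroup oN pnatE // !inE; apply/eqP=> eq_qp.
  by move: q1; rewrite eq_qp modnn modn_small ?prime_gt1.
have sXH : <[x]> \subset H by rewrite -defXY mulG_subl.
have sXYH : <[x * y]> \subset H.
  by rewrite cycle_subG groupM // -cycle_subG -defXY ?mulG_subl ?mulG_subr.
have nsUG := sdprod_abelian_joing_normal defG cHH sXH.
have nsVG := sdprod_abelian_joing_normal defG cHH sXYH.
have cxy : commute x y by apply/cent1P; rewrite -cent_cycle -cycle_subG centsC.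
have tiCxy : 'C_<[x * y]>(N) = 1.
  by apply: subcent_cycleM_faithful; rewrite -?cycle_subG ?ox ?oy.
have OpG : 'O_p(G) = <[y]>.
  by rewrite (pcore_sdprod_cent defG p'N pH) -defXY subcent_mulg_faithful.
have OpU : 'O_p(N <*> <[x]>) = 1.
  by rewrite (pcore_sdprod_cent (sdprod_subr defG sXH) p'N (pgroupS sXH pH)).
have OpV : 'O_p(N <*> <[x * y]>) = 1.
  by rewrite (pcore_sdprod_cent (sdprod_subr defG sXYH) p'N (pgroupS sXYH pH)).
split; last first.
  by split=> //; rewrite OpG OpU OpV mulg1 -cardG_gt1 -orderE oy prime_gt1.
split; try exact: normal_subnormal.
rewrite -comm_joingE; last first.
  exact: normC (subset_trans (normal_sub nsUG) (normal_norm nsVG)).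
by rewrite joing_joingl joing_cycleM (dprodWY defH) (sdprodWY defG).
Qed.
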